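(* Let $\mathcal P_0=\{p\in\mathbb C[z]:p(0)=0\}$. Let $\pi$ be a non-zero submultiplicative seminorm on $\mathcal P_0$ and let $\{p_k\}_{k\in\mathbb N}$ be a sequence in $\mathcal P_0$ such that $\{p_k:k\in\mathbb N\}$ is dense in $\mathcal P_0$ with respect to any seminorm on $\mathcal P_0$. Assume that there exist sequences $\{n_k\}_{k\in\mathbb N}$ and $\{m_k\}_{k\in\mathbb N}$ of positive integers and a sequence $\{c_k\}_{k\in\mathbb N}$ of complex numbers such that $\pi(c_kz^{n_k}-p_k)\to0$ and $\pi(z(1+z)^{m_k}-p_k)\to0$ as $k\to\infty$. Then $\pi$ is a norm and the completion $A$ of $(\mathcal P_0,\pi)$ is an infinite dimensional chaotic Banach algebra with $z$ as a chaotic element.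
   Context: A function $\pi$ on an algebra is submultiplicative if $\pi(ab)\le\pi(a)\pi(b)$. A Banach algebra is a complex algebra, possibly without unit, with a complete submultiplicative norm; $A^{\#}=A\oplus\mathrm{span}\{\mathbf 1\}$ is its unitalization. An element $a\in A$ is chaotic if both $\{wa^n:w\in\mathbb C,\ n\in\mathbb N\}$ and $\{(\mathbf 1+a)^na:n\in\mathbb N\}$ are dense in $A$; $A$ is chaotic if it has a chaotic element. $\mathbb N$ denotes the positive integers. *)

(* The complex field is  R[i]  (mathcomp-real-closed)
   for an arbitrary  R : realType  (every realType is isomorphic to the reals). *)
From mathcomp Require Import all_boot all_order all_algebra.
From mathcomp Require Import all_classical all_reals all_analysis.
From mathcomp.real_closed Require Export complex.
Set Implicit Arguments. Unset Strict Implicit. Unset Printing Implicit Defensive.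
Import Order.TTheory GRing.Theory Num.Theory.
Import numFieldNormedType.Exports.
Local Open Scope ring_scope.
Local Open Scope complex_scope.
Local Open Scope classical_set_scope.

Definition P0 (R : realType) : set {poly R[i]} := [set p | p.[0] = 0].

Definition seminormP0 (R : realType) (s : {poly R[i]} -> R) : Prop :=
  [/\ forall p, P0 p -> 0 <= s p,
      forall (c : R[i]) p, P0 p -> (s (c *: p))%:C = `|c| * (s p)%:C &
      forall p q, P0 p -> P0 q -> s (p + q) <= s p + s q].

Definition submultP0 (R : realType) (s : {poly R[i]} -> R) : Prop :=
  forall p q, P0 p -> P0 q -> s (p * q) <= s p * s q.

Definition dense_all_seminorms (R : realType) (pk : nat -> {poly R[i]}) : Prop :=
  forall s : {poly R[i]} -> R, seminormP0 s ->
  forall p, P0 p -> forall e : R, 0 < e -> exists k, s (p - pk k) < e.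

Definition banach_alg_mul (R : realType) (A : completeNormedModType R[i])
    (mul : A -> A -> A) : Prop :=
  associative mul /\
  [/\ forall a b c, mul (a + b) c = mul a c + mul b c,
      forall a b c, mul a (b + c) = mul a b + mul a c,
      forall (w : R[i]) a b, mul (w *: a) b = w *: mul a b,
      forall (w : R[i]) a b, mul a (w *: b) = w *: mul a b &
      forall a b, `|mul a b| <= `|a| * `|b|].

(* a^n for n >= 1 (a^1 = a, a^(n+1) = a a^n) *)
Definition apow (T : Type) (mul : T -> T -> T) (a : T) (n : nat) : T :=
  iter n.-1 (mul a) a.

(* (1 + a)^n a, computed in the unitalization: (1 + a) x = x + a x *)
Definition opow_a (T : zmodType) (mul : T -> T -> T) (a : T) (n : nat) : T :=
  iter n (fun x => x + mul a x) a.

Definition chaotic (R : realType) (A : completeNormedModType R[i])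
    (mul : A -> A -> A) (a : A) : Prop :=
  dense [set x | exists (w : R[i]) (n : nat), (0 < n)%N /\ x = w *: apow mul a n]
  /\ dense [set x | exists n : nat, (0 < n)%N /\ x = opow_a mul a n].

Definition infinite_dim (R : realType) (A : completeNormedModType R[i]) : Prop :=
  ~ exists (n : nat) (v : 'I_n -> A),
      forall a : A, exists c : 'I_n -> R[i], a = \sum_(j < n) c j *: v j.

Definition is_completion (R : realType) (s : {poly R[i]} -> R)
    (A : completeNormedModType R[i]) (mul : A -> A -> A)
    (iota : {poly R[i]} -> A) : Prop :=
  (forall p q, P0 p -> P0 q -> iota (p + q) = iota p + iota q) /\
  [/\ forall (c : R[i]) p, P0 p -> iota (c *: p) = c *: iota p,
      forall p q, P0 p -> P0 q -> iota (p * q) = mul (iota p) (iota q),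
      forall p, P0 p -> `|iota p| = (s p)%:C,
      dense (iota @` (@P0 R)) &
      continuous (fun x : A * A => mul x.1 x.2)].

From mathcomp Require Import all_boot all_order all_algebra.
From mathcomp Require Import all_classical all_reals all_analysis.
From mathcomp.real_closed Require Import complex.
Import Order.TTheory GRing.Theory Num.Theory.
Import numFieldNormedType.Exports.
Import Normc.
Local Open Scope ring_scope.
Local Open Scope complex_scope.
Local Open Scope classical_set_scope.
Set Implicit Arguments. Unset Strict Implicit. Unset Printing Implicit Defensive.

(* Applying the density of {p_k} to the seminorm [pi + |coefficient of z^D|]
   with [D] large shows that both sequences [c_k z^(n_k)] and [z (1 + z)^(m_k)]
   are dense in [(P_0, pi)].  If [pi p = 0] for some [p <> 0], then either [p]
   has a root [a <> 0], and [f |-> f(a)] is bounded by [pi], or [p] is a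
   monomial, and [f |-> f'(0)] is bounded by [pi]; both contradict the density
   of the orbit [z (1 + z)^m], whose values at [a] avoid a neighbourhood of [0]
   or of [2a] and whose derivatives at [0] all equal [1].  The Banach algebra
   laws pass to the completion by density and continuity, the powers of [z]
   stay independent since [pi] is a norm, and the two dense sequences are the
   images of the two orbits of [z]. *)

Section PolyVanishingAtZero.
Variable R : realType.
Implicit Types p q : {poly R[i]}.

Lemma P0_0 : P0 (0 : {poly R[i]}). Proof. by rewrite /P0 /= horner0. Qed.

Lemma P0D p q : P0 p -> P0 q -> P0 (p + q).
Proof. by rewrite /P0 /= hornerD => -> ->; rewrite addr0. Qed.

Lemma P0N p : P0 p -> P0 (- p).
Proof. by rewrite /P0 /= hornerN => ->; rewrite oppr0. Qed.

Lemma P0B p q : P0 p -> P0 q -> P0 (p - q).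
Proof. by move=> Pp Pq; exact/P0D/P0N. Qed.

Lemma P0Z c p : P0 p -> P0 (c *: p).
Proof. by rewrite /P0 /= hornerZ => ->; rewrite mulr0. Qed.

Lemma P0Ml p q : P0 p -> P0 (p * q).
Proof. by rewrite /P0 /= hornerM => ->; rewrite mul0r. Qed.

Lemma P0Mr p q : P0 q -> P0 (p * q).
Proof. by rewrite /P0 /= hornerM => ->; rewrite mulr0. Qed.

Lemma P0X : P0 ('X : {poly R[i]}). Proof. by rewrite /P0 /= hornerX. Qed.

Lemma P0Xn n : (0 < n)%N -> P0 ('X^n : {poly R[i]}).
Proof. by case: n => // n _; rewrite exprS; exact/P0Ml/P0X. Qed.

Lemma P0_sum (I : Type) (r : seq I) (Q : pred I) (F : I -> {poly R[i]}) :
  (forall i, P0 (F i)) -> P0 (\sum_(i <- r | Q i) F i).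
Proof. by move=> PF; apply: big_ind => //; [exact: P0_0 | exact: P0D]. Qed.

End PolyVanishingAtZero.

Arguments P0_0 {R}.
Arguments P0X {R}.

Lemma norm_normc (R : rcfType) (z : R[i]) : `|z| = (normc z)%:C.
Proof. by case: z. Qed.

Lemma normc_ge0 (R : rcfType) (z : R[i]) : 0 <= normc z.
Proof. by case: z => a b; exact: sqrtr_ge0. Qed.

Lemma ger0_normc (R : rcfType) (r : R) : 0 <= r -> normc r%:C = r.
Proof. by move=> r0; apply: complexI; rewrite -norm_normc ger0_norm ?lecR. Qed.

Lemma lerB_normc (R : rcfType) (x y : R[i]) : normc x - normc y <= normc (x - y).
Proof. by rewrite lerBlDr -{1}(subrK y x) le_normcD. Qed.

Lemma normcX (R : rcfType) (z : R[i]) n : normc (z ^+ n) = normc z ^+ n.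
Proof. by elim: n => [|n IH]; rewrite ?expr0 ?normc1 // !exprS normcM IH. Qed.

Section Seminorm.
Variables (R : realType) (pi : {poly R[i]} -> R).
Hypothesis pi_seminorm : seminormP0 pi.
Implicit Types p q : {poly R[i]}.

Lemma seminorm_ge0 p : P0 p -> 0 <= pi p.
Proof. by case: pi_seminorm => + _ _; apply. Qed.

Lemma seminormZ c p : P0 p -> pi (c *: p) = normc c * pi p.
Proof.
by case: pi_seminorm => _ piZ _ Pp; apply: complexI; rewrite piZ // norm_normc rmorphM.
Qed.

Lemma seminormD p q : P0 p -> P0 q -> pi (p + q) <= pi p + pi q.
Proof. by case: pi_seminorm => _ _; apply. Qed.

Lemma seminormN p : P0 p -> pi (- p) = pi p.
Proof. by move=> Pp; rewrite -scaleN1r seminormZ // normcN normc1 mul1r. Qed.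

Lemma seminormBC p q : P0 p -> P0 q -> pi (p - q) = pi (q - p).
Proof. by move=> Pp Pq; rewrite -opprB seminormN //; exact: P0B. Qed.

Lemma seminormB_le p q r : P0 p -> P0 q -> P0 r ->
  pi (p - r) <= pi (p - q) + pi (q - r).
Proof.
by move=> Pp Pq Pr; rewrite -[p - r](subrKA q); apply: seminormD; exact: P0B.
Qed.

Lemma seminorm_le_addB p q : P0 p -> P0 q -> pi p <= pi q + pi (p - q).
Proof.
move=> Pp Pq; have := seminormB_le Pp Pq P0_0.
by rewrite !subr0 addrC seminormBC.
Qed.

Hypothesis pi_submult : submultP0 pi.

(* [s] need not vanish at [0]: split off its constant term. *)
Lemma seminorm_kernelM p s : P0 p -> pi p = 0 -> pi (p * s) = 0.
Proof.
move=> Pp p0; set s0 := s - (s.[0])%:P.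
have Ps0 : P0 s0 by rewrite /P0 /= hornerD hornerN hornerC subrr.
have -> : p * s = p * s0 + s.[0] *: p.
  by rewrite mulrDr mulrN [p * _%:P]mulrC mul_polyC subrK.
apply/eqP; rewrite eq_le seminorm_ge0 ?andbT; last exact/P0D/P0Z/Pp/P0Ml.
apply: le_trans (seminormD (P0Ml _ Pp) (P0Z _ Pp)) _.
rewrite seminormZ // p0 mulr0 addr0; apply: le_trans (pi_submult Pp Ps0) _.
by rewrite p0 mul0r.
Qed.

End Seminorm.

Definition seminorm_dense_seq (R : realType) (pi : {poly R[i]} -> R)
    (u : nat -> {poly R[i]}) : Prop :=
  forall q, P0 q -> forall e : R, 0 < e -> exists k, pi (q - u k) < e.

Section DenseSequence.
Variables (R : realType) (pi : {poly R[i]} -> R) (pk : nat -> {poly R[i]}).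
Hypothesis pi_seminorm : seminormP0 pi.
Hypothesis P0_pk : forall k, P0 (pk k).
Hypothesis pk_dense : dense_all_seminorms pk.

Lemma seminormP0_add_coef D : seminormP0 (fun p => pi p + normc p`_D).
Proof.
split=> [p Pp|c p Pp|p q Pp Pq].
- by rewrite addr_ge0 ?normc_ge0 ?(seminorm_ge0 pi_seminorm).
- by rewrite coefZ (seminormZ pi_seminorm) // normcM -mulrDr norm_normc rmorphM.
- rewrite coefD addrACA.
  exact: lerD (seminormD pi_seminorm Pp Pq) (le_normcD _ _).
Qed.

(* Approximating [q + d z^D], with [D] above the degrees of [q] and of the
   first [K] terms, in the seminorm [pi + |coefficient D|] forces [K <= k]. *)
Lemma dense_all_seminorms_tail q e K : P0 q -> 0 < e ->
  exists k, (K <= k)%N /\ pi (q - pk k) < e.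
Proof.
move=> Pq e_gt0; set D := (\max_(j < K) size (pk j) + size q).+1%N.
have pk_coefD j : (j < K)%N -> (pk j)`_D = 0.
  move=> jK; apply: nth_default; apply: leq_trans (leqW (leq_addr _ _)).
  exact: (@leq_bigmax _ (fun i : 'I_K => size (pk i)) (Ordinal jK)).
have q_coefD : q`_D = 0 by apply: nth_default; rewrite leqW ?leq_addl.
have PXD : P0 ('X^D : {poly R[i]}) by exact: P0Xn.
have XD_ge0 := seminorm_ge0 pi_seminorm PXD.
set d := e / (pi 'X^D + 1).
have d_gt0 : 0 < d by rewrite divr_gt0 // ltr_pwDr.
have Pq' : P0 (q + d%:C *: 'X^D) by exact/P0D/P0Z.
have [k] := pk_dense (seminormP0_add_coef D) Pq' d_gt0.
rewrite coefB coefD coefZ coefXn eqxx mulr1 q_coefD add0r => hk.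
have Pk := P0_pk k.
exists k; split.
  rewrite leqNgt; apply/negP => kK; move: hk.
  by rewrite pk_coefD // subr0 ger0_normc ?ltW // gtrDr ltNge seminorm_ge0 //; exact/P0B.
apply: le_lt_trans (seminormB_le pi_seminorm Pq Pq' Pk) _.
rewrite opprD addNKr (seminormN pi_seminorm) ?(seminormZ pi_seminorm) //;
  last exact: P0Z.
rewrite ger0_normc ?ltW //.
have -> : e = d * pi 'X^D + d.
  by rewrite /d -[X in _ + X]mulr1 -mulrDr divfK // gt_eqF // ltr_pwDr.
by rewrite ltrD2l (le_lt_trans _ hk) // lerDl normc_ge0.
Qed.

Lemma seminorm_dense_seq_cvg (u : nat -> {poly R[i]}) : (forall k, P0 (u k)) ->
  (fun k => pi (u k - pk k)) @ \oo --> (0 : R) -> seminorm_dense_seq pi u.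
Proof.
move=> P0_u /cvgrPdist_lt u_pk q Pq e e_gt0.
have e2_gt0 : 0 < e / 2 by rewrite divr_gt0.
have [N _ uN] := u_pk _ e2_gt0.
have [k [Nk hk]] := dense_all_seminorms_tail N Pq e2_gt0.
exists k; apply: le_lt_trans (seminormB_le pi_seminorm Pq (P0_pk k) (P0_u k)) _.
rewrite (seminormBC pi_seminorm (P0_pk k) (P0_u k)) (splitr e) ltrD //.
by apply: le_lt_trans (uN k Nk); rewrite sub0r normrN ler_norm.
Qed.

End DenseSequence.

Section SeminormKernel.
Variables (R : realType) (pi : {poly R[i]} -> R).
Hypothesis pi_seminorm : seminormP0 pi.
Hypothesis pi_submult : submultP0 pi.
Implicit Types (f g p : {poly R[i]}) (a : R[i]).

Lemma P0_orbit m : P0 ('X * (1 + 'X) ^+ m : {poly R[i]}).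
Proof. exact/P0Ml/P0X. Qed.

(* [g (f - f(a))] is a multiple of [g (z - a)], hence in the kernel, so
   [|f(a)| pi g <= pi (g f) <= pi g pi f]. *)
Lemma seminorm_eval_le a g : P0 g -> pi g != 0 ->
  pi (g * ('X - a%:P)) = 0 -> forall f, P0 f -> normc f.[a] <= pi f.
Proof.
move=> Pg g_neq0 ker_ga f Pf.
have g_gt0 : 0 < pi g by rewrite lt_def g_neq0 seminorm_ge0.
have : root (f - (f.[a])%:P) a by rewrite /root hornerD hornerN hornerC subrr.
case/factor_theorem => s fE.
have gf_ker : f.[a] *: g - g * f = - (g * ('X - a%:P) * s).
  by rewrite -mulrA [_ * s]mulrC -fE mulrBr opprB [g * _%:P]mulrC mul_polyC.
have := seminorm_le_addB pi_seminorm (P0Z f.[a] Pg) (P0Ml f Pg).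
have Pga : P0 (g * ('X - a%:P)) by exact: P0Ml.
rewrite gf_ker (seminormN pi_seminorm) ?(seminorm_kernelM _ _ s Pga ker_ga) //;
  last exact: P0Ml.
rewrite addr0 (seminormZ pi_seminorm) // => /le_trans/(_ (pi_submult Pg Pf)).
by rewrite mulrC ler_pM2l.
Qed.

Lemma seminorm_Xn_coef1_le n : pi 'X^(n.+2) = 0 ->
  forall f, P0 f -> normc f`_1 * pi 'X^(n.+1) <= pi ('X^n * f).
Proof.
move=> Xn2_ker f Pf.
have f_low : take_poly 2 f = f`_1 *: 'X.
  apply/polyP => -[|[|i]]; rewrite coef_take_poly coefZ coefX ?mulr0 ?mulr1 //.
  by rewrite /= -horner_coef0 Pf.
have fE : 'X^n * f = f`_1 *: 'X^(n.+1) + 'X^(n.+2) * drop_poly 2 f.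
  rewrite -{1}(poly_take_drop 2 f) f_low mulrDr -scalerAr -exprSr.
  by rewrite mulrCA -exprD addn2 mulrC.
rewrite -(seminormZ pi_seminorm); last exact: P0Xn.
have := seminorm_le_addB pi_seminorm (P0Z f`_1 (P0Xn R (ltn0Sn n))) (P0Mr 'X^n Pf).
have PXf : P0 ('X^(n.+2) * drop_poly 2 f) by exact/P0Ml/P0Xn.
rewrite [in X in _ + pi X]fE opprD addrA subrr add0r (seminormN pi_seminorm) //.
by rewrite (seminorm_kernelM pi_seminorm pi_submult _ (P0Xn R (ltn0Sn _)) Xn2_ker) addr0.
Qed.

Hypothesis pi_neq0 : exists p, P0 p /\ pi p != 0.
Hypothesis orbit_dense : seminorm_dense_seq pi (fun m => 'X * (1 + 'X) ^+ m).

(* The orbit values [a (1 + a)^m] stay away from [0] if [|1 + a| >= 1], and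
   from [2a] otherwise. *)
Lemma not_seminorm_eval_le a : a != 0 -> ~ (forall f, P0 f -> normc f.[a] <= pi f).
Proof.
move=> a_neq0 eval_le.
have a_gt0 : 0 < normc a.
  by rewrite lt_def normc_ge0 andbT; apply: contra a_neq0 => /eqP/eq0_normc ->.
have orbit_eval m : ('X * (1 + 'X) ^+ m).[a] = a * (1 + a) ^+ m by rewrite !hornerE.
have [a1_ge1|a1_lt1] := lerP 1 (normc (1 + a)).
- have [m] := orbit_dense P0_0 a_gt0.
  apply/negP; rewrite -leNgt; apply: le_trans _ (eval_le _ (P0B P0_0 (P0_orbit m))).
  rewrite hornerD hornerN horner0 add0r orbit_eval normcN normcM normcX.
  by rewrite ler_peMr ?normc_ge0 // exprn_ege1.
- have P2X : P0 ('X *+ 2 : {poly R[i]}) by rewrite /P0 /= hornerMn hornerX mul0rn.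
  have [m] := orbit_dense P2X a_gt0.
  apply/negP; rewrite -leNgt; apply: le_trans _ (eval_le _ (P0B P2X (P0_orbit m))).
  rewrite hornerD hornerN hornerMn hornerX orbit_eval.
  apply: le_trans (lerB_normc _ _); rewrite normcMn normcM normcX lerBrDr.
  by rewrite mulr2n lerD2l ler_piMr ?normc_ge0 // exprn_ile1 ?normc_ge0 ?ltW.
Qed.

(* Every orbit element has coefficient [1] at [z]. *)
Lemma not_seminorm_coef1_le (a M : R) : 0 < a ->
  ~ (forall f, P0 f -> normc f`_1 * a <= M * pi f).
Proof.
move=> a_gt0 coef1_le.
have M1_gt0 : 0 < `|M| + 1 by rewrite ltr_pwDr.
have [m] := orbit_dense P0_0 (divr_gt0 a_gt0 M1_gt0).
rewrite sub0r (seminormN pi_seminorm (P0_orbit m)) => orbit_small.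
have := coef1_le _ (P0_orbit m).
rewrite coefXM /= -horner_coef0 !hornerE expr1n normc1 mul1r.
move=> /le_trans/(_ (ler_wpM2r (seminorm_ge0 pi_seminorm (P0_orbit m)) (ler_norm M))).
move=> /le_trans/(_ (ler_wpM2l (normr_ge0 M) (ltW orbit_small))).
rewrite mulrA ler_pdivlMr // mulrDr mulr1 mulrC gerDl leNgt.
by rewrite a_gt0.
Qed.

Lemma seminorm_Xn_neq0 n : pi 'X^(n.+1) != 0.
Proof.
elim: n => [|n IHn].
  apply/eqP => X_ker; case: pi_neq0 => f [Pf]; apply/negP/negPn/eqP.
  have /factor_theorem [g ->] : root f 0 by exact/eqP.
  by rewrite subr0 mulrC (seminorm_kernelM pi_seminorm pi_submult) //; exact: P0X.
apply/eqP => Xn2_ker; have Xn1_gt0 : 0 < pi 'X^(n.+1).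
  by rewrite lt_def IHn (seminorm_ge0 pi_seminorm (P0Xn R (ltn0Sn n))).
have [M XnM] : exists M : R, forall f, P0 f -> pi ('X^n * f) <= M * pi f.
  case: n {IHn Xn1_gt0 Xn2_ker} => [|n]; first by exists 1 => f _; rewrite mul1r mul1r.
  by exists (pi 'X^(n.+1)) => f Pf; apply: pi_submult => //; exact: P0Xn.
apply: (not_seminorm_coef1_le (M := M) Xn1_gt0) => f Pf.
exact: le_trans (seminorm_Xn_coef1_le Xn2_ker Pf) (XnM f Pf).
Qed.

(* Induction on the size: a root [a != 0] of [p] factors [p = g (z - a)] with
   [g] outside the kernel; otherwise [p] is a monomial. *)
Lemma seminorm_kernel_eq0 p : P0 p -> pi p = 0 -> p = 0.
Proof.
move: {2}(size p).+1 (ltnSn (size p)) => N; elim: N p => // N IHN p.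
rewrite ltnS => sizep Pp p_ker; apply/eqP/negPn/negP => p_neq0.
have [j [r r0_neq0 pE]] := multiplicity_XsubC p 0.
move: r0_neq0; rewrite p_neq0 /= subr0 in pE * => r0_neq0.
have r_neq0 : r != 0 by apply: contraNneq p_neq0; rewrite pE => ->; rewrite mul0r.
have [j0|j_gt0] := posnP j.
  by move: Pp r0_neq0; rewrite /P0 /= pE j0 expr0 mulr1 /root => ->; rewrite eqxx.
have [/closed_rootP [a ra]|/negPn/size_poly1P [c c_neq0 rE]] := boolP (size r != 1%N).
- have a_neq0 : a != 0 by apply: contraNneq r0_neq0 => <-.
  have [s rE] := factor_theorem _ _ ra.
  have pgE : p = s * 'X^j * ('X - a%:P) by rewrite pE rE mulrAC.
  have Pg : P0 (s * 'X^j) by exact/P0Mr/P0Xn.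
  have g_neq0 : s * 'X^j != 0.
    by apply: contraNneq p_neq0; rewrite pgE => ->; rewrite mul0r.
  apply: (not_seminorm_eval_le a_neq0).
  apply: (seminorm_eval_le Pg); last by rewrite -pgE.
  have sizeXa : size ('X - a%:P) = 2%N := size_XsubC a.
  have Xa_neq0 : 'X - a%:P != 0 by rewrite -size_poly_eq0 sizeXa.
  apply: contra (g_neq0) => /eqP/(IHN _ _ Pg) -> //; move: sizep.
  by rewrite pgE size_mul // sizeXa addn2.
- move: p_ker; rewrite pE rE mul_polyC (seminormZ pi_seminorm); last exact: P0Xn.
  rewrite -(prednK j_gt0) => /eqP; rewrite mulf_eq0 (negPf (seminorm_Xn_neq0 _)) orbF.
  by move=> /eqP/eq0_normc/eqP; rewrite (negPf c_neq0).
Qed.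

End SeminormKernel.

Section DenseExtension.
Variables (T U : topologicalType) (D : set T).
Hypothesis D_dense : dense D.

Lemma dense_continuous_closed (f : T -> U) (S : set U) : continuous f -> closed S ->
  (forall x, D x -> S (f x)) -> forall x, S (f x).
Proof.
move=> f_cont S_closed fDS x; apply: contrapT => Sfx.
have /closed_openC : closed (f @^-1` S) by exact: (proj1 (continuous_closedP f)).
by move=> /(D_dense (ex_intro _ x Sfx)) [y [Sfy Dy]]; exact/Sfy/fDS.
Qed.

Lemma dense_continuous2_closed (f : T -> T -> U) (S : set U) :
  (forall b, continuous (f ^~ b)) -> (forall a, continuous (f a)) -> closed S ->
  (forall a b, D a -> D b -> S (f a b)) -> forall a b, S (f a b).
Proof.
move=> fl fr S_closed fDS a; apply: dense_continuous_closed => // b Db.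
by apply: (dense_continuous_closed (f := f ^~ b)) => // a' Da'; exact: fDS.
Qed.

End DenseExtension.

Section DenseExtensionEq.
Variables (K : numFieldType) (T : topologicalType) (V : normedModType K) (D : set T).
Hypothesis D_dense : dense D.

Let closed0 : closed [set 0 : V].
Proof. exact/accessible_closed_set1/hausdorff_accessible/norm_hausdorff. Qed.

Lemma dense_continuous_eq (f g : T -> V) : continuous f -> continuous g ->
  (forall x, D x -> f x = g x) -> forall x, f x = g x.
Proof.
move=> f_cont g_cont fgD x; apply/subr0_eq.
apply: (dense_continuous_closed D_dense (f := f - g) _ closed0 _ x).
  by move=> y; exact: continuousB (f_cont y) (g_cont y).
by move=> y Dy; rewrite /= !fctE fgD // subrr.
Qed.

Lemma dense_continuous2_eq (f g : T -> T -> V) :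
  (forall b, continuous (f ^~ b)) -> (forall a, continuous (f a)) ->
  (forall b, continuous (g ^~ b)) -> (forall a, continuous (g a)) ->
  (forall a b, D a -> D b -> f a b = g a b) -> forall a b, f a b = g a b.
Proof.
move=> fl fr gl gr fgD a b; apply/subr0_eq.
apply: (dense_continuous2_closed D_dense (f := fun a b => f a b - g a b) _ _
  closed0 _ a b).
- by move=> b' a'; apply: continuousB; [exact: fl | exact: gl].
- by move=> a' b'; apply: continuousB; [exact: fr | exact: gr].
by move=> a' b' Da' Db'; rewrite /= fgD ?subrr.
Qed.

End DenseExtensionEq.

Lemma closed_nneg (K : numFieldType) : closed [set x : K | 0 <= x].
Proof.
have -> : [set x : K | 0 <= x] = (fun x : K => `|x| - x) @^-1` [set 0].
  apply/seteqP; split => x /=; first by move=> x_ge0; rewrite ger0_norm ?subrr.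
  by move/eqP; rewrite subr_eq0 => /eqP <-.
apply: (proj1 (continuous_closedP _)).
  by move=> x; apply: continuousB; [exact: norm_continuous | exact: cvg_id].
exact/accessible_closed_set1/hausdorff_accessible/norm_hausdorff.
Qed.

Lemma dense_approx (K : numFieldType) (V : normedModType K) (D S : set V) :
  dense D -> (forall x, D x -> forall e : K, 0 < e -> exists2 s, S s & `|x - s| < e) ->
  dense S.
Proof.
move=> D_dense DS O [a Oa] O_open.
have /nbhs_ballP [e /= e_gt0 aeO] : nbhs a O.
  by move: O_open; rewrite openE => /(_ a Oa).
have e2_gt0 : 0 < e / 2 by rewrite divr_gt0.
have [x [ax Dx]] := D_dense _ (ex_intro _ a (ballxx a e2_gt0)) (ball_open a (e / 2)).
have [s Ss xs] := DS x Dx _ e2_gt0.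
exists s; split => //; apply: aeO; rewrite -ball_normE /ball_ /=.
have ax' : ball_ Num.norm a (e / 2) x by rewrite ball_normE.
by apply: le_lt_trans (ler_distD x a s) _; rewrite (splitr e) ltrD.
Qed.

Lemma span_dependent (K : fieldType) (V : lmodType K) n (v : 'I_n -> V)
    (w : 'I_n.+1 -> V) :
  (forall i, exists c : 'I_n -> K, w i = \sum_(j < n) c j *: v j) ->
  exists u : 'I_n.+1 -> K, (exists i, u i != 0) /\ \sum_i u i *: w i = 0.
Proof.
move=> /choice [c wE]; pose M : 'M[K]_(n.+1, n) := \matrix_(i, j) c i j.
have ker_neq0 : kermx M != 0.
  by rewrite -mxrank_eq0 mxrank_ker subn_eq0 -ltnNge ltnS rank_leq_col.
have [i ker_i] : exists i, row i (kermx M) != 0.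
  apply/existsP; apply: contraNT ker_neq0 => /existsPn ker0.
  by apply/eqP/row_matrixP => i; rewrite row0; exact/eqP/negbNE/ker0.
set u := row i (kermx M) in ker_i.
have uM : u *m M = 0 by rewrite -row_mul mulmx_ker row0.
exists (u 0); split.
  apply/existsP; apply: contraNT ker_i => /existsPn u0.
  by apply/eqP/rowP => k; rewrite [RHS]mxE; exact/eqP/negbNE/u0.
under eq_bigr do rewrite wE scaler_sumr.
rewrite exchange_big /=; apply: big1 => j _.
under eq_bigr do rewrite scalerA.
have uMj : \sum_k u 0 k * c k j = 0.
  have := congr1 (fun A : 'M[K]_(1, n) => A 0 j) uM; rewrite mxE [RHS]mxE => uMj.
  by rewrite -[RHS]uMj; apply: eq_bigr => k _; rewrite [M k j]mxE.
by rewrite -scaler_suml uMj scale0r.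
Qed.

Section Completion.
Variables (R : realType) (pi : {poly R[i]} -> R).
Variables (A : completeNormedModType R[i]) (mul : A -> A -> A).
Variable iota : {poly R[i]} -> A.
Hypothesis iota_completion : is_completion pi mul iota.
Implicit Types (p q r : {poly R[i]}) (a b c : A).

Local Notation D := (iota @` (@P0 R)).

Lemma iotaD p q : P0 p -> P0 q -> iota (p + q) = iota p + iota q.
Proof. by case: iota_completion => + _; apply. Qed.

Lemma iotaZ (w : R[i]) p : P0 p -> iota (w *: p) = w *: iota p.
Proof. by case: iota_completion => _ [+ _ _ _ _]; apply. Qed.

Lemma iotaM p q : P0 p -> P0 q -> iota (p * q) = mul (iota p) (iota q).
Proof. by case: iota_completion => _ [_ + _ _ _]; apply. Qed.

Lemma norm_iota p : P0 p -> `|iota p| = (pi p)%:C.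
Proof. by case: iota_completion => _ [_ _ + _ _]; apply. Qed.

Lemma iota_dense : dense D.
Proof. by case: iota_completion => _ []. Qed.

Lemma mul_continuous a b : {for (a, b), continuous (fun z : A * A => mul z.1 z.2)}.
Proof. by case: iota_completion => _ [_ _ _ _]; apply. Qed.

Lemma cvg_mul (T : Type) (F : set_system T) (FF : Filter F) (f g : T -> A) a b :
  f x @[x --> F] --> a -> g x @[x --> F] --> b ->
  mul (f x) (g x) @[x --> F] --> mul a b.
Proof. exact: continuous2_cvg (@mul_continuous a b). Qed.

Local Ltac continuity := move=> *; move=> ?; repeat first
  [ exact: cst_continuous | apply: cvg_mul | apply: cvg_id | apply: cvgD | apply: cvgZ ].

Lemma mulA : associative mul.
Proof.
have mulA_D c : D c -> forall a b, mul (mul a b) c = mul a (mul b c).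
  case=> r Pr <-; apply: (dense_continuous2_eq iota_dense); try by continuity.
  move=> _ _ [p Pp <-] [q Pq <-].
  by rewrite -!iotaM ?mulrA //; auto using P0Ml.
move=> a b; apply: (dense_continuous_eq iota_dense); try by continuity.
by move=> c /mulA_D.
Qed.

Lemma mulDl a b c : mul (a + b) c = mul a c + mul b c.
Proof.
have mulDl_D c' : D c' -> forall a b, mul (a + b) c' = mul a c' + mul b c'.
  case=> r Pr <-; apply: (dense_continuous2_eq iota_dense); try by continuity.
  move=> _ _ [p Pp <-] [q Pq <-].
  by rewrite -iotaD -?iotaM ?mulrDl ?iotaD //; auto using P0D, P0Ml.
move: c; apply: (dense_continuous_eq iota_dense); try by continuity.
by move=> c /mulDl_D.
Qed.

Lemma mulDr a b c : mul a (b + c) = mul a b + mul a c.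
Proof.
have mulDr_D a' : D a' -> forall b c, mul a' (b + c) = mul a' b + mul a' c.
  case=> r Pr <-; apply: (dense_continuous2_eq iota_dense); try by continuity.
  move=> _ _ [p Pp <-] [q Pq <-].
  by rewrite -iotaD -?iotaM ?mulrDr ?iotaD //; auto using P0D, P0Ml.
move: a; apply: (dense_continuous_eq iota_dense); try by continuity.
by move=> a /mulDr_D.
Qed.

Lemma mulZl (w : R[i]) a b : mul (w *: a) b = w *: mul a b.
Proof.
move: a b; apply: (dense_continuous2_eq iota_dense); try by continuity.
move=> _ _ [p Pp <-] [q Pq <-].
by rewrite -iotaZ -?iotaM -?scalerAl ?iotaZ //; auto using P0Z, P0Ml.
Qed.

Lemma mulZr (w : R[i]) a b : mul a (w *: b) = w *: mul a b.
Proof.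
move: a b; apply: (dense_continuous2_eq iota_dense); try by continuity.
move=> _ _ [p Pp <-] [q Pq <-].
by rewrite -iotaZ -?iotaM -?scalerAr ?iotaZ //; auto using P0Z, P0Ml.
Qed.

Hypothesis pi_submult : submultP0 pi.

Lemma norm_mul_le a b : `|mul a b| <= `|a| * `|b|.
Proof.
rewrite -subr_ge0; move: a b.
apply: (dense_continuous2_closed iota_dense
  (f := fun a b => `|a| * `|b| - `|mul a b|) (S := [set x | 0 <= x])).
- move=> b a; apply: cvgB.
    by apply: cvgM; [apply: cvg_norm; exact: cvg_id | exact: cst_continuous].
  by apply: cvg_norm; apply: cvg_mul; [exact: cvg_id | exact: cst_continuous].
- move=> a b; apply: cvgB.
    by apply: cvgM; [exact: cst_continuous | apply: cvg_norm; exact: cvg_id].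
  by apply: cvg_norm; apply: cvg_mul; [exact: cst_continuous | exact: cvg_id].
- exact: closed_nneg.
move=> _ _ [p Pp <-] [q Pq <-].
rewrite /= subr_ge0 -iotaM // !norm_iota //; last exact: P0Ml.
by rewrite -rmorphM lecR; exact: pi_submult.
Qed.

Lemma completion_banach_alg : banach_alg_mul mul.
Proof.
split; first exact: mulA.
by split; [exact: mulDl | exact: mulDr | exact: mulZl | exact: mulZr | exact: norm_mul_le].
Qed.

Lemma iotaB p q : P0 p -> P0 q -> iota (p - q) = iota p - iota q.
Proof.
move=> Pp Pq; have -> : - q = (-1 : R[i]) *: q by rewrite scaleN1r.
by rewrite iotaD ?iotaZ ?scaleN1r //; exact: P0N.
Qed.

Lemma iota_sum (I : Type) (s : seq I) (F : I -> {poly R[i]}) :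
  (forall i, P0 (F i)) -> iota (\sum_(i <- s) F i) = \sum_(i <- s) iota (F i).
Proof.
move=> PF; elim: s => [|x s IHs].
  by rewrite !big_nil -(subrr (0 : {poly R[i]})) iotaB ?subrr //; exact: P0_0.
by rewrite !big_cons iotaD ?IHs //; exact: P0_sum.
Qed.

Lemma apow_iotaX n : (0 < n)%N -> apow mul (iota 'X) n = iota 'X^n.
Proof.
case: n => // n _; rewrite /apow /=; elim: n => [|n IHn] /=; first by rewrite expr1.
by rewrite IHn -iotaM ?exprS //; [exact: P0X | exact/P0Ml/P0X].
Qed.

Lemma opow_iotaX n : opow_a mul (iota 'X) n = iota ('X * (1 + 'X) ^+ n).
Proof.
elim: n => [|n IHn] /=; first by rewrite expr0 mulr1.
have Pf := P0_orbit R n.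
rewrite IHn -iotaM // -?iotaD //; [|exact/P0Ml/P0X | exact: P0X].
by rewrite exprS [in RHS]mulrCA mulrDl mul1r.
Qed.

Lemma dense_seminorm_dense_seq (S : set A) (u : nat -> {poly R[i]}) :
  (forall k, P0 (u k)) -> (forall k, S (iota (u k))) -> seminorm_dense_seq pi u ->
  dense S.
Proof.
move=> P0_u Su u_dense; apply: (dense_approx iota_dense) => _ [p Pp <-] e.
rewrite ltcE => /andP [Im_e Re_gt0].
have [k pu] := u_dense p Pp _ Re_gt0.
exists (iota (u k)) => //; rewrite -iotaB // norm_iota; last exact: P0B.
by move: Im_e; rewrite ltcE /= pu andbT.
Qed.

Hypothesis pi_definite : forall p, P0 p -> pi p = 0 -> p = 0.

Lemma completion_infinite_dim : infinite_dim A.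
Proof.
move=> [n [v spanA]].
have [u [[i ui] uw]] :=
  span_dependent (w := fun i : 'I_n.+1 => iota 'X^(i.+1)) (fun=> spanA _).
pose P := \sum_(k < n.+1) u k *: 'X^(k.+1).
have PP : P0 P by apply: P0_sum => k; exact/P0Z/P0Xn.
have iotaP : iota P = 0.
  rewrite /P iota_sum; last by move=> k; exact/P0Z/P0Xn.
  by apply: etrans uw; apply: eq_bigr => k _; rewrite iotaZ //; exact: P0Xn.
have P_eq0 : P = 0.
  by apply: pi_definite => //; apply: complexI; rewrite -norm_iota // iotaP normr0.
apply/negP: ui; apply/negPn/eqP.
have := congr1 (fun q : {poly R[i]} => q`_i.+1) P_eq0.
rewrite coef0 coef_sum (bigD1 i) //= coefZ coefXn eqxx mulr1 big1 ?addr0 // => k ki.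
rewrite coefZ coefXn.
have /negbTE-> : (i.+1 != k.+1)%N by rewrite eqSS eq_sym.
by rewrite mulr0.
Qed.

End Completion.

Theorem lemma3p1 (R : realType) (pi : {poly R[i]} -> R)
  (pk : nat -> {poly R[i]}) (n m : nat -> nat) (c : nat -> R[i]) :
  seminormP0 pi -> submultP0 pi -> (exists p, P0 p /\ pi p != 0) ->
  (forall k, P0 (pk k)) -> dense_all_seminorms pk ->
  (forall k, (0 < n k)%N) -> (forall k, (0 < m k)%N) ->
  (fun k => pi (c k *: 'X^(n k) - pk k)) @ \oo --> (0 : R) ->
  (fun k => pi ('X * (1 + 'X) ^+ (m k) - pk k)) @ \oo --> (0 : R) ->
  (forall p, P0 p -> pi p = 0 -> p = 0) /\
  (forall (A : completeNormedModType R[i]) (mul : A -> A -> A)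
          (iota : {poly R[i]} -> A),
     is_completion pi mul iota ->
     [/\ banach_alg_mul mul, infinite_dim A & chaotic mul (iota 'X)]).
Proof.
move=> pi_seminorm pi_submult pi_neq0 P0_pk pk_dense n_gt0 m_gt0 cvg_mon cvg_orb.
have P0_mon k : P0 (c k *: 'X^(n k)) by exact/P0Z/P0Xn.
have P0_orb k := P0_orbit R (m k).
have mon_dense := seminorm_dense_seq_cvg pi_seminorm P0_pk pk_dense P0_mon cvg_mon.
have orb_dense := seminorm_dense_seq_cvg pi_seminorm P0_pk pk_dense P0_orb cvg_orb.
have orbit_dense : seminorm_dense_seq pi (fun j => 'X * (1 + 'X) ^+ j).
  by move=> q Pq e e_gt0; have [k] := orb_dense q Pq e e_gt0; exists (m k).
have pi_definite := seminorm_kernel_eq0 pi_seminorm pi_submult pi_neq0 orbit_dense.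
split=> // A mul iota iota_completion; split.
- exact: completion_banach_alg iota_completion pi_submult.
- exact: completion_infinite_dim iota_completion pi_definite.
split.
- apply: (dense_seminorm_dense_seq iota_completion P0_mon _ mon_dense) => k.
  exists (c k), (n k); split => //.
  by rewrite (apow_iotaX iota_completion) // (iotaZ iota_completion) //; exact: P0Xn.
- apply: (dense_seminorm_dense_seq iota_completion P0_orb _ orb_dense) => k.
  by exists (m k); split; last rewrite (opow_iotaX iota_completion).
Qed.
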